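(* There exist no cones in $\mathbb{R}^3$ with proper biharmonic Gauss map. That is, for every curve $\sigma:I\to\mathbb{S}^2$ parametrized by arc length, the Gauss map of the cone $(0,\infty)\times I\to\mathbb{R}^3$, $(t,s)\mapsto t\,\sigma(s)$, is not proper biharmonic.
   Context: The cone over $\sigma$ is an immersed surface in $\mathbb{R}^3$ with induced metric $dt^2+t^2ds^2$, oriented by the unit normal $N(s)$ of $\sigma$ in $\mathbb{S}^2$. Its Gauss map sends a point to its oriented tangent plane in the Grassmannian of oriented 2-planes in $\mathbb{R}^3$ with the standard metric (identify $T_PG=P^*\otimes P^\perp$, declaring $\{e_i^*\otimes e_3\}$ orthonormal). A map with tension field $\tau(\phi)=\operatorname{trace}\nabla d\phi$ is biharmonic if $-\Delta\tau(\phi)-\operatorname{trace}R^N(d\phi,\tau(\phi))d\phi=0$ ($\Delta=-\operatorname{trace}(\nabla^\phi)^2$, $R^N(X,Y)=\nabla_X\nabla_Y-\nabla_Y\nabla_X-\nabla_{[X,Y]}$), harmonic if $\tau(\phi)=0$, and proper biharmonic if biharmonic but not harmonic. *)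

From Stdlib Require Import Reals.
From Coquelicot Require Import Coquelicot.
Open Scope R_scope.

Definition vec3 := (R * R * R)%type.
Definition vx (u : vec3) : R := fst (fst u).
Definition vy (u : vec3) : R := snd (fst u).
Definition vz (u : vec3) : R := snd u.
Definition mkv (a b c : R) : vec3 := (a, b, c).
Definition vzero : vec3 := mkv 0 0 0.
Definition vadd (u v : vec3) : vec3 := mkv (vx u + vx v) (vy u + vy v) (vz u + vz v).
Definition vscal (k : R) (u : vec3) : vec3 := mkv (k * vx u) (k * vy u) (k * vz u).
Definition vsub (u v : vec3) : vec3 := vadd u (vscal (-1) v).
Definition vdot (u v : vec3) : R := vx u * vx v + vy u * vy v + vz u * vz v.
Definition vnorm (u : vec3) : R := sqrt (vdot u u).
Definition vcross (u v : vec3) : vec3 :=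
  mkv (vy u * vz v - vz u * vy v) (vz u * vx v - vx u * vz v) (vx u * vy v - vy u * vx v).

Definition sum2 (f : nat -> R) : R := f 0%nat + f 1%nat.
Definition vsum2 (f : nat -> vec3) : vec3 := vadd (f 0%nat) (f 1%nat).

Definition vderiv (c : R -> vec3) (s : R) : vec3 :=
  mkv (Derive (fun u => vx (c u)) s) (Derive (fun u => vy (c u)) s)
      (Derive (fun u => vz (c u)) s).

Definition in_open_int (a b : Rbar) (s : R) : Prop := Rbar_lt a s /\ Rbar_lt s b.
Definition smooth_on (a b : Rbar) (f : R -> R) : Prop :=
  forall (k : nat) (s : R), in_open_int a b s -> ex_derive (Derive_n f k) s.
Definition smooth_curve (a b : Rbar) (c : R -> vec3) : Prop :=
  smooth_on a b (fun u => vx (c u)) /\ smooth_on a b (fun u => vy (c u)) /\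
  smooth_on a b (fun u => vz (c u)).

Definition pt := (R * R)%type.
Definition pd (i : nat) (f : pt -> R) (p : pt) : R :=
  match i with
  | O => Derive (fun x => f (x, snd p)) (fst p)
  | _ => Derive (fun y => f (fst p, y)) (snd p)
  end.
Definition vpd (i : nat) (F : pt -> vec3) (p : pt) : vec3 :=
  mkv (pd i (fun q => vx (F q)) p) (pd i (fun q => vy (F q)) p)
      (pd i (fun q => vz (F q)) p).

Definition imetric (X : pt -> vec3) (i j : nat) (p : pt) : R :=
  vdot (vpd i X p) (vpd j X p).
Definition idet (X : pt -> vec3) (p : pt) : R :=
  imetric X 0 0 p * imetric X 1 1 p - imetric X 0 1 p * imetric X 1 0 p.
Definition iinv (X : pt -> vec3) (i j : nat) (p : pt) : R :=
  match i, j with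
  | O, O => imetric X 1 1 p / idet X p
  | S _, S _ => imetric X 0 0 p / idet X p
  | O, S _ => - imetric X 0 1 p / idet X p
  | S _, O => - imetric X 1 0 p / idet X p
  end.
Definition christ (X : pt -> vec3) (k i j : nat) (p : pt) : R :=
  / 2 * sum2 (fun l => iinv X k l p *
     (pd i (imetric X j l) p + pd j (imetric X i l) p - pd l (imetric X i j) p)).

(** * Target: the Grassmannian of oriented 2-planes, identified isometrically
    with the unit sphere S^2 ⊂ R^3 via the oriented unit normal. *)
Definition tproj (y w : vec3) : vec3 := vsub w (vscal (vdot w y) y).
(** Riemann curvature of S^2, convention R(X,Y)=∇_X∇_Y-∇_Y∇_X-∇_[X,Y] *)
Definition RS2 (x y z : vec3) : vec3 := vsub (vscal (vdot y z) x) (vscal (vdot x z) y).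

Definition pconn (phi : pt -> vec3) (i : nat) (V : pt -> vec3) (p : pt) : vec3 :=
  tproj (phi p) (vpd i V p).

Definition tension (X phi : pt -> vec3) (p : pt) : vec3 :=
  vsum2 (fun i => vsum2 (fun j => vscal (iinv X i j p)
    (vsub (pconn phi i (vpd j phi) p)
          (vsum2 (fun k => vscal (christ X k i j p) (vpd k phi p)))))).

(** trace (∇^phi)^2 V  (= - Delta V) *)
Definition trace_hess (X phi : pt -> vec3) (V : pt -> vec3) (p : pt) : vec3 :=
  vsum2 (fun i => vsum2 (fun j => vscal (iinv X i j p)
    (vsub (pconn phi i (pconn phi j V) p)
          (vsum2 (fun k => vscal (christ X k i j p) (pconn phi k V p)))))).

Definition bitension (X phi : pt -> vec3) (p : pt) : vec3 :=
  vsub (trace_hess X phi (tension X phi) p)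
       (vsum2 (fun i => vsum2 (fun j => vscal (iinv X i j p)
          (RS2 (vpd i phi p) (tension X phi p) (vpd j phi p))))).

Definition harmonic (D : pt -> Prop) (X phi : pt -> vec3) : Prop :=
  forall p, D p -> tension X phi p = vzero.
Definition biharmonic (D : pt -> Prop) (X phi : pt -> vec3) : Prop :=
  forall p, D p -> bitension X phi p = vzero.
Definition proper_biharmonic (D : pt -> Prop) (X phi : pt -> vec3) : Prop :=
  biharmonic D X phi /\ ~ harmonic D X phi.

Definition gauss_map (X : pt -> vec3) (p : pt) : vec3 :=
  vscal (/ vnorm (vcross (vpd 0 X p) (vpd 1 X p))) (vcross (vpd 0 X p) (vpd 1 X p)).

Definition cone (sigma : R -> vec3) (p : pt) : vec3 := vscal (fst p) (sigma (snd p)).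
Definition cone_dom (a b : Rbar) (p : pt) : Prop := 0 < fst p /\ in_open_int a b (snd p).

(* Along the cone the Gauss map depends on s only: it is the conormal N = sigma x sigma' of
   sigma in S^2, and N' = - kappa sigma' where kappa = <sigma'', N> is the geodesic curvature.
   All fields met along the way have the form r(t) (f sigma + g sigma'); the pull-back
   connection acts on them by differentiating r in the t-direction and by
   (f, g) |-> (f' - g, f + g') in the s-direction.  With the metric dt^2 + t^2 ds^2 this gives
   tau = t^-2 (kappa sigma - kappa' sigma') and the bitension
   t^-4 ((3 kappa + 3 kappa'' + kappa^3) sigma - (kappa' + kappa''') sigma').
   Biharmonicity thus forces kappa''' + kappa' = 0 and 3 kappa'' + 3 kappa + kappa^3 = 0,
   whose only solution on an interval is kappa = 0, and then tau = 0. *)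

From Stdlib Require Import Reals Lra Lia.
From Coquelicot Require Import Coquelicot.
Open Scope R_scope.

(** * Vectors *)

Lemma vec3_ext (u v : vec3) : vx u = vx v -> vy u = vy v -> vz u = vz v -> u = v.
Proof. destruct u as [[x y] z], v as [[x' y'] z']; unfold vx, vy, vz; simpl; congruence. Qed.

Ltac vunfold :=
  unfold tproj, RS2, vdot, vcross, vsub, vadd, vscal, vzero, mkv, vx, vy, vz; cbn [fst snd].
Ltac vring := apply vec3_ext; vunfold; ring.
Ltac vfield := apply vec3_ext; vunfold; field.

Lemma vdot_comm u v : vdot u v = vdot v u.
Proof. vunfold; ring. Qed.

Lemma vscal_0_l v : vscal 0 v = vzero.
Proof. vring. Qed.

Lemma vadd_0_l v : vadd vzero v = v.
Proof. vring. Qed.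

Lemma vadd_0_r v : vadd v vzero = v.
Proof. vring. Qed.

Lemma vsub_0_r v : vsub v vzero = v.
Proof. vring. Qed.

Lemma RS2_0_l y z : RS2 vzero y z = vzero.
Proof. vring. Qed.

Lemma vdot_self_of_vnorm u : vnorm u = 1 -> vdot u u = 1.
Proof.
  unfold vnorm; intros H.
  rewrite <- (sqrt_sqrt (vdot u u)); [rewrite H; ring | unfold vdot; nra].
Qed.

Lemma vdot_cross_self u v :
  vdot (vcross u v) (vcross u v) = vdot u u * vdot v v - vdot u v * vdot u v.
Proof. vunfold; ring. Qed.

Lemma tproj_vscal y c w : tproj y (vscal c w) = vscal c (tproj y w).
Proof. vring. Qed.

Section Orthonormal.
Variables u v : vec3.
Hypotheses (u_unit : vdot u u = 1) (v_unit : vdot v v = 1) (uv_orth : vdot u v = 0).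

Lemma vdot_cross_self_orthonormal : vdot (vcross u v) (vcross u v) = 1.
Proof. rewrite vdot_cross_self, u_unit, v_unit, uv_orth; ring. Qed.

(* The triple-product expansion [(a.(b x c)) w = (w.(b x c)) a + (w.(c x a)) b + (w.(a x b)) c]
   for [a, b, c = u, v, u x v]. *)
Lemma orthonormal_expansion w :
  w = vadd (vadd (vscal (vdot w u) u) (vscal (vdot w v) v))
           (vscal (vdot w (vcross u v)) (vcross u v)).
Proof.
  set (n := vcross u v).
  assert (vn : vcross v n = u).
  { transitivity (vsub (vscal (vdot v v) u) (vscal (vdot u v) v)); [unfold n; vring|].
    rewrite v_unit, uv_orth; vring. }
  assert (nu : vcross n u = v).
  { transitivity (vsub (vscal (vdot u u) v) (vscal (vdot u v) u)); [unfold n; vring|].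
    rewrite u_unit, uv_orth; vring. }
  assert (triple : vscal (vdot u (vcross v n)) w =
    vadd (vadd (vscal (vdot w (vcross v n)) u) (vscal (vdot w (vcross n u)) v))
         (vscal (vdot w n) n)) by (unfold n; vring).
  rewrite vn, nu, u_unit in triple.
  rewrite <- triple; vring.
Qed.

Lemma tproj_orthonormal x y z :
  tproj (vcross u v) (vadd (vadd (vscal x u) (vscal y v)) (vscal z (vcross u v))) =
  vadd (vscal x u) (vscal y v).
Proof.
  unfold tproj.
  replace (vdot (vadd (vadd (vscal x u) (vscal y v)) (vscal z (vcross u v))) (vcross u v))
    with (z * vdot (vcross u v) (vcross u v)) by (vunfold; ring).
  rewrite vdot_cross_self_orthonormal; vring.
Qed.

Lemma RS2_orthonormal c x y :
  RS2 (vscal c v) (vadd (vscal x u) (vscal y v)) (vscal c v) = vscal (- (c * c * x)) u.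
Proof.
  unfold RS2.
  replace (vdot (vadd (vscal x u) (vscal y v)) (vscal c v))
    with (c * (x * vdot u v + y * vdot v v)) by (vunfold; ring).
  replace (vdot (vscal c v) (vscal c v)) with (c * c * vdot v v) by (vunfold; ring).
  rewrite uv_orth, v_unit; vring.
Qed.

Lemma orthonormal_comb_eq0 x y : vadd (vscal x u) (vscal y v) = vzero -> x = 0 /\ y = 0.
Proof.
  intros E.
  assert (Eu := f_equal (fun w => vdot w u) E); assert (Ev := f_equal (fun w => vdot w v) E).
  cbv beta in Eu, Ev.
  replace (vdot (vadd (vscal x u) (vscal y v)) u) with (x * vdot u u + y * vdot u v)
    in Eu by (vunfold; ring).
  replace (vdot (vadd (vscal x u) (vscal y v)) v) with (x * vdot u v + y * vdot v v)
    in Ev by (vunfold; ring).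
  replace (vdot vzero u) with 0 in Eu by (vunfold; ring).
  replace (vdot vzero v) with 0 in Ev by (vunfold; ring).
  rewrite u_unit, v_unit, uv_orth in *; lra.
Qed.

End Orthonormal.

(** * Calculus on an open interval *)

(* Coquelicot's rules are stated over abstract normed modules: fixing the structures lets
   them unify with [Rplus], [Rminus], [Ropp], and [ring_R] unfolds the structure operations
   in which their derivative values are written. *)
Notation is_derive_Rplus := (is_derive_plus (K := R_AbsRing) (V := R_NormedModule)).
Notation is_derive_Rminus := (is_derive_minus (K := R_AbsRing) (V := R_NormedModule)).
Notation is_derive_Ropp := (is_derive_opp (K := R_AbsRing) (V := R_NormedModule)).

Ltac ring_R :=
  match goal with |- @eq _ ?x ?y => change (@eq R x y) end;
  unfold minus, plus, opp, mult, zero; simpl; ring.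

Tactic Notation "derive_from" uconstr(H) := refine (eq_ind _ (is_derive _ _) H _ _).

Lemma is_derive_Rmult (f g : R -> R) x df dg : is_derive f x df -> is_derive g x dg ->
  is_derive (fun y => f y * g y) x (df * g x + f x * dg).
Proof. intros Hf Hg; exact (is_derive_mult f g x df dg Hf Hg Rmult_comm). Qed.

Lemma locally_open_int a b s : in_open_int a b s -> locally s (in_open_int a b).
Proof. intros [H1 H2]. apply locally_interval with a b; auto. intros; split; auto. Qed.

Lemma in_open_int_between a b x y u :
  in_open_int a b x -> in_open_int a b y -> x <= u <= y -> in_open_int a b u.
Proof.
  intros [Hx _] [_ Hy] Hu; split.
  - destruct a; simpl in *; auto; lra.
  - destruct b; simpl in *; auto; lra.
Qed.

Lemma is_derive_const_on_open_int a b f c s l :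
  in_open_int a b s -> (forall y, in_open_int a b y -> f y = c) -> is_derive f s l -> l = 0.
Proof.
  intros Hs E H.
  assert (H0 : is_derive f s 0).
  { apply is_derive_ext_loc with (fun _ => c); [|exact (is_derive_const c s)].
    apply filter_imp with (in_open_int a b); [|apply locally_open_int; auto].
    intros; symmetry; auto. }
  rewrite <- (is_derive_unique _ _ _ H), <- (is_derive_unique _ _ _ H0); reflexivity.
Qed.

Lemma eq_on_open_int_of_is_derive_0 a b f x y :
  (forall u, in_open_int a b u -> is_derive f u 0) ->
  in_open_int a b x -> in_open_int a b y -> f x = f y.
Proof.
  intros Hd.
  assert (Hlt : forall x y, in_open_int a b x -> in_open_int a b y -> x < y -> f x = f y).
  { intros x' y' Hx Hy Hxy; apply (eq_is_derive f x' y'); auto.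
    intros u Hu; apply Hd, (in_open_int_between a b x' y'); auto. }
  intros Hx Hy; destruct (Rtotal_order x y) as [|[|]]; subst; auto.
  symmetry; auto.
Qed.

Section Smoothness.
Variables a b : Rbar.

Definition derivable_upto (u : R -> R) (k : nat) : Prop :=
  forall j, (j <= k)%nat -> forall y, in_open_int a b y -> ex_derive (Derive_n u j) y.

Lemma Derive_n_S u k x : Derive_n u (S k) x = Derive_n (Derive u) k x.
Proof.
  change (Derive_n u (S k) x = Derive_n (Derive_n u 1) k x).
  rewrite Derive_n_comp; f_equal; lia.
Qed.

Lemma Derive_n_ext_open_int u v k s : in_open_int a b s ->
  (forall y, in_open_int a b y -> u y = v y) -> Derive_n u k s = Derive_n v k s.
Proof.
  intros Hs H; apply Derive_n_ext_loc.
  apply filter_imp with (in_open_int a b); auto; apply locally_open_int; auto.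
Qed.

Lemma ex_derive_Derive_n_ext_open_int u v k s : in_open_int a b s ->
  (forall y, in_open_int a b y -> u y = v y) ->
  ex_derive (Derive_n u k) s -> ex_derive (Derive_n v k) s.
Proof.
  intros Hs H; apply ex_derive_ext_loc.
  apply filter_imp with (in_open_int a b); [|apply locally_open_int; auto].
  intros y Hy; apply Derive_n_ext_open_int; auto.
Qed.

Lemma derivable_upto_Derive u k : derivable_upto u (S k) -> derivable_upto (Derive u) k.
Proof.
  intros H j Hj y Hy; apply ex_derive_ext with (Derive_n u (S j)).
  - intros; apply Derive_n_S.
  - apply H; auto; lia.
Qed.

Lemma derivable_upto_S u k : derivable_upto u (S k) -> derivable_upto u k.
Proof. intros H j Hj y Hy; apply H; auto; lia. Qed.

Lemma derivable_upto_plus k : forall u v,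
  derivable_upto u k -> derivable_upto v k -> derivable_upto (fun x => u x + v x) k.
Proof.
  induction k; intros u v Hu Hv [|j] Hj y Hy.
  - apply (ex_derive_plus u v); [apply (Hu 0%nat) | apply (Hv 0%nat)]; auto.
  - lia.
  - apply (ex_derive_plus u v); [apply (Hu 0%nat) | apply (Hv 0%nat)]; auto; lia.
  - apply ex_derive_ext with (Derive_n (Derive (fun x => u x + v x)) j).
    { intros; symmetry; apply Derive_n_S. }
    apply ex_derive_Derive_n_ext_open_int with (fun x => Derive u x + Derive v x); auto.
    + intros z Hz; symmetry; apply Derive_plus; [apply (Hu 0%nat) | apply (Hv 0%nat)]; auto; lia.
    + apply IHk; try apply derivable_upto_Derive; auto; lia.
Qed.

Lemma derivable_upto_mult k : forall u v,
  derivable_upto u k -> derivable_upto v k -> derivable_upto (fun x => u x * v x) k.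
Proof.
  induction k; intros u v Hu Hv [|j] Hj y Hy.
  - apply (ex_derive_mult u v); [apply (Hu 0%nat) | apply (Hv 0%nat)]; auto.
  - lia.
  - apply (ex_derive_mult u v); [apply (Hu 0%nat) | apply (Hv 0%nat)]; auto; lia.
  - apply ex_derive_ext with (Derive_n (Derive (fun x => u x * v x)) j).
    { intros; symmetry; apply Derive_n_S. }
    apply ex_derive_Derive_n_ext_open_int
      with (fun x => Derive u x * v x + u x * Derive v x); auto.
    + intros z Hz; symmetry; apply Derive_mult; [apply (Hu 0%nat) | apply (Hv 0%nat)]; auto; lia.
    + refine (derivable_upto_plus k _ _ _ _ j _ y Hy); [apply IHk .. | lia];
        auto using derivable_upto_Derive, derivable_upto_S.
Qed.

Lemma smooth_on_derivable_upto u : smooth_on a b u <-> forall k, derivable_upto u k.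
Proof. split; [intros H k j _ y Hy | intros H k s Hs; apply (H k k)]; auto. Qed.

Lemma smooth_on_plus u v :
  smooth_on a b u -> smooth_on a b v -> smooth_on a b (fun x => u x + v x).
Proof. rewrite !smooth_on_derivable_upto; intros; apply derivable_upto_plus; auto. Qed.

Lemma smooth_on_mult u v :
  smooth_on a b u -> smooth_on a b v -> smooth_on a b (fun x => u x * v x).
Proof. rewrite !smooth_on_derivable_upto; intros; apply derivable_upto_mult; auto. Qed.

Lemma smooth_on_Derive u : smooth_on a b u -> smooth_on a b (Derive u).
Proof. rewrite !smooth_on_derivable_upto; intros H k; apply derivable_upto_Derive; auto. Qed.

Lemma smooth_on_ext u v : (forall x, u x = v x) -> smooth_on a b u -> smooth_on a b v.
Proof.
  intros E H k s Hs; apply ex_derive_ext with (Derive_n u k); auto.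
  intros; apply Derive_n_ext; auto.
Qed.

Lemma smooth_on_const c : smooth_on a b (fun _ => c).
Proof.
  intros [|k] s Hs; [apply ex_derive_const|].
  apply ex_derive_ext with (fun _ => 0); [intros; symmetry; apply Derive_n_const|].
  apply ex_derive_const.
Qed.

Lemma smooth_on_minus u v :
  smooth_on a b u -> smooth_on a b v -> smooth_on a b (fun x => u x - v x).
Proof.
  intros Hu Hv; apply smooth_on_ext with (fun x => u x + (-1) * v x); [intros; ring|].
  apply smooth_on_plus, smooth_on_mult; auto using smooth_on_const.
Qed.

Lemma is_derive_Derive_n_smooth u n s : smooth_on a b u -> in_open_int a b s ->
  is_derive (Derive_n u n) s (Derive_n u (S n) s).
Proof. intros H Hs; apply Derive_correct, H; auto. Qed.

End Smoothness.

Definition is_vderive (c : R -> vec3) (s : R) (v : vec3) : Prop :=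
  is_derive (fun u => vx (c u)) s (vx v) /\ is_derive (fun u => vy (c u)) s (vy v) /\
  is_derive (fun u => vz (c u)) s (vz v).

Lemma is_vderive_vadd c1 c2 s v1 v2 : is_vderive c1 s v1 -> is_vderive c2 s v2 ->
  is_vderive (fun u => vadd (c1 u) (c2 u)) s (vadd v1 v2).
Proof.
  intros [H1 [H2 H3]] [G1 [G2 G3]]; split; [|split];
    [exact (is_derive_plus _ _ _ _ _ H1 G1) | exact (is_derive_plus _ _ _ _ _ H2 G2)
    | exact (is_derive_plus _ _ _ _ _ H3 G3)].
Qed.

Lemma is_vderive_vscal (r : R -> R) c s r' v : is_derive r s r' -> is_vderive c s v ->
  is_vderive (fun u => vscal (r u) (c u)) s (vadd (vscal r' (c s)) (vscal (r s) v)).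
Proof.
  intros Hr [H1 [H2 H3]]; split; [|split];
    [exact (is_derive_Rmult _ _ _ _ _ Hr H1) | exact (is_derive_Rmult _ _ _ _ _ Hr H2)
    | exact (is_derive_Rmult _ _ _ _ _ Hr H3)].
Qed.

Lemma is_vderive_vcross c1 c2 s v1 v2 : is_vderive c1 s v1 -> is_vderive c2 s v2 ->
  is_vderive (fun u => vcross (c1 u) (c2 u)) s (vadd (vcross v1 (c2 s)) (vcross (c1 s) v2)).
Proof.
  intros [H1 [H2 H3]] [G1 [G2 G3]].
  assert (cross_rule : forall f1 g1 f2 g2 df1 dg1 df2 dg2,
    is_derive f1 s df1 -> is_derive g1 s dg1 -> is_derive f2 s df2 -> is_derive g2 s dg2 ->
    is_derive (fun u => f1 u * g1 u - f2 u * g2 u) s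
      (df1 * g1 s + f1 s * dg1 - (df2 * g2 s + f2 s * dg2))).
  { intros * Hf1 Hg1 Hf2 Hg2.
    exact (is_derive_minus _ _ _ _ _ (is_derive_Rmult _ _ _ _ _ Hf1 Hg1)
             (is_derive_Rmult _ _ _ _ _ Hf2 Hg2)). }
  split; [|split];
    (derive_from (cross_rule _ _ _ _ _ _ _ _ _ _ _ _);
     [eassumption .. | vunfold; ring_R]).
Qed.

Lemma is_derive_vdot c1 c2 s v1 v2 : is_vderive c1 s v1 -> is_vderive c2 s v2 ->
  is_derive (fun u => vdot (c1 u) (c2 u)) s (vdot v1 (c2 s) + vdot (c1 s) v2).
Proof.
  intros [H1 [H2 H3]] [G1 [G2 G3]].
  derive_from (is_derive_Rplus _ _ _ _ _
    (is_derive_Rplus _ _ _ _ _ (is_derive_Rmult _ _ _ _ _ H1 G1) (is_derive_Rmult _ _ _ _ _ H2 G2))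
    (is_derive_Rmult _ _ _ _ _ H3 G3)).
  vunfold; ring_R.
Qed.

Section SmoothCurves.
Variables a b : Rbar.

Lemma is_vderive_smooth_curve c s : smooth_curve a b c -> in_open_int a b s ->
  is_vderive c s (vderiv c s).
Proof.
  intros [H1 [H2 H3]] Hs; split; [|split]; apply Derive_correct;
    [apply (H1 0%nat) | apply (H2 0%nat) | apply (H3 0%nat)]; auto.
Qed.

Lemma smooth_curve_vderiv c : smooth_curve a b c -> smooth_curve a b (vderiv c).
Proof. intros [H1 [H2 H3]]; split; [|split]; apply smooth_on_Derive; auto. Qed.

Lemma smooth_on_vdot c1 c2 : smooth_curve a b c1 -> smooth_curve a b c2 ->
  smooth_on a b (fun u => vdot (c1 u) (c2 u)).
Proof.
  intros [H1 [H2 H3]] [G1 [G2 G3]]; unfold vdot.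
  apply smooth_on_plus; [apply smooth_on_plus|]; apply smooth_on_mult; auto.
Qed.

Lemma smooth_curve_vcross c1 c2 : smooth_curve a b c1 -> smooth_curve a b c2 ->
  smooth_curve a b (fun u => vcross (c1 u) (c2 u)).
Proof.
  intros [H1 [H2 H3]] [G1 [G2 G3]]; unfold vcross, vx, vy, vz, mkv; cbn [fst snd].
  split; [|split]; apply smooth_on_minus; apply smooth_on_mult; auto.
Qed.

End SmoothCurves.

Definition sep_field (r : R -> R) (V : R -> vec3) (q : pt) : vec3 := vscal (r (fst q)) (V (snd q)).

Lemma vpd0_sep_field r V t s r' : is_derive r t r' -> vpd 0 (sep_field r V) (t, s) = vscal r' (V s).
Proof.
  intros Hr; unfold vpd, pd, sep_field; cbn [fst snd].
  apply vec3_ext; unfold vscal, mkv, vx, vy, vz; cbn [fst snd];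
    rewrite Derive_scal_l; f_equal; apply is_derive_unique; exact Hr.
Qed.

Lemma vpd1_sep_field r V t s V' :
  is_vderive V s V' -> vpd 1 (sep_field r V) (t, s) = vscal (r t) V'.
Proof.
  intros [H1 [H2 H3]]; unfold vpd, pd, sep_field; cbn [fst snd].
  apply vec3_ext; unfold vscal, mkv, vx, vy, vz; cbn [fst snd];
    rewrite Derive_scal; f_equal; apply is_derive_unique; assumption.
Qed.

Section ConeDomain.
Variables a b : Rbar.

Lemma pd_ext_cone_dom i (f g : pt -> R) p :
  (forall q, cone_dom a b q -> f q = g q) -> cone_dom a b p -> pd i f p = pd i g p.
Proof.
  intros E [Ht Hs]; destruct p as [t s]; cbn [fst snd] in *; destruct i; cbn [pd fst snd];
    apply Derive_ext_loc.
  - apply filter_imp with (fun x => 0 < x);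
      [intros x Hx; apply E; split; auto
      | apply locally_interval with (Finite 0) p_infty; simpl; auto].
  - apply filter_imp with (in_open_int a b);
      [intros y Hy; apply E; split; auto | apply locally_open_int; auto].
Qed.

Lemma vpd_ext_cone_dom i (F G : pt -> vec3) p :
  (forall q, cone_dom a b q -> F q = G q) -> cone_dom a b p -> vpd i F p = vpd i G p.
Proof.
  intros E Hp; unfold vpd; f_equal; apply pd_ext_cone_dom; auto; intros q Hq; rewrite E; auto.
Qed.

End ConeDomain.

Lemma cube_injective x y : x ^ 3 = y ^ 3 -> x = y.
Proof.
  intros E.
  assert (F : (x - y) * ((x + y / 2) * (x + y / 2) + 3 / 4 * (y * y)) = 0)
    by (transitivity (x ^ 3 - y ^ 3); [field | lra]).
  destruct (Rmult_integral _ _ F) as [D|Q]; [lra|].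
  pose proof (Rle_0_sqr (x + y / 2)); pose proof (Rle_0_sqr y); unfold Rsqr in *.
  assert (y = 0) by nra; subst; nra.
Qed.

(* Differentiating the second equation and using the first gives f^2 f' = 0, so f^3, hence f,
   is constant; then f'' = 0 and 3 f + f^3 = 0. *)
Lemma cubic_ode_trivial a b f : smooth_on a b f ->
  (forall s, in_open_int a b s -> Derive_n f 3 s + Derive_n f 1 s = 0) ->
  (forall s, in_open_int a b s -> 3 * f s + 3 * Derive_n f 2 s + f s ^ 3 = 0) ->
  forall s, in_open_int a b s -> f s = 0.
Proof.
  intros Hf odd_eq even_eq.
  assert (D : forall n s, in_open_int a b s -> is_derive (Derive_n f n) s (Derive_n f (S n) s))
    by (intros; apply is_derive_Derive_n_smooth with a b; auto).
  assert (cube' : forall s, in_open_int a b s ->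
    is_derive (fun u => f u ^ 3) s (3 * f s ^ 2 * Derive_n f 1 s)).
  { intros s Hs; derive_from (is_derive_pow _ 3 _ _ (D 0%nat s Hs)).
    simpl; ring. }
  assert (flat : forall s, in_open_int a b s -> f s ^ 2 * Derive_n f 1 s = 0).
  { intros s Hs.
    assert (E : is_derive (fun u => 3 * f u + 3 * Derive_n f 2 u + f u ^ 3) s
      (3 * Derive_n f 1 s + 3 * Derive_n f 3 s + 3 * f s ^ 2 * Derive_n f 1 s)).
    { apply is_derive_Rplus; [apply is_derive_Rplus; apply is_derive_scal | apply cube'; exact Hs].
      - exact (D 0%nat s Hs).
      - exact (D 2%nat s Hs). }
    apply (is_derive_const_on_open_int a b _ 0 s) in E; auto.
    specialize (odd_eq s Hs); nra. }
  assert (f_const : forall x y, in_open_int a b x -> in_open_int a b y -> f x = f y).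
  { intros x y Hx Hy; apply cube_injective.
    apply (eq_on_open_int_of_is_derive_0 a b (fun u => f u ^ 3)); auto.
    intros u Hu; derive_from (cube' u Hu).
    change (3 * f u ^ 2 * Derive_n f 1 u = 0); rewrite Rmult_assoc, flat; auto; ring. }
  intros s Hs.
  assert (d1 : forall u, in_open_int a b u -> Derive_n f 1 u = 0).
  { intros u Hu; apply (is_derive_const_on_open_int a b f (f u) u); auto.
    exact (D 0%nat u Hu). }
  assert (d2 : Derive_n f 2 s = 0)
    by (apply (is_derive_const_on_open_int a b (Derive_n f 1) 0 s); auto).
  specialize (even_eq s Hs); rewrite d2 in even_eq; nra.
Qed.

(** * Unit-speed curves on the sphere and their cones *)

Section UnitSpeedCurve.
Variables (a b : Rbar) (sigma : R -> vec3).
Hypothesis sigma_smooth : smooth_curve a b sigma.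
Hypothesis sigma_unit : forall s, in_open_int a b s -> vnorm (sigma s) = 1.
Hypothesis sigma_unit_speed : forall s, in_open_int a b s -> vnorm (vderiv sigma s) = 1.

Definition tangent : R -> vec3 := vderiv sigma.
Definition accel : R -> vec3 := vderiv tangent.
Definition conormal (s : R) : vec3 := vcross (sigma s) (tangent s).
Definition kappa (s : R) : R := vdot (accel s) (conormal s).
Definition dkappa (n : nat) : R -> R := Derive_n kappa n.

Lemma tangent_smooth : smooth_curve a b tangent.
Proof. apply smooth_curve_vderiv; auto. Qed.

Lemma is_vderive_sigma s : in_open_int a b s -> is_vderive sigma s (tangent s).
Proof. intros; apply is_vderive_smooth_curve with a b; auto. Qed.

Lemma is_vderive_tangent s : in_open_int a b s -> is_vderive tangent s (accel s).
Proof. intros; apply is_vderive_smooth_curve with a b; auto using tangent_smooth. Qed.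

Lemma kappa_smooth : smooth_on a b kappa.
Proof.
  apply smooth_on_vdot;
    [apply smooth_curve_vderiv, tangent_smooth | apply smooth_curve_vcross, tangent_smooth; auto].
Qed.

Lemma is_derive_dkappa n s : in_open_int a b s -> is_derive (dkappa n) s (dkappa (S n) s).
Proof. intros Hs; apply is_derive_Derive_n_smooth with a b; auto using kappa_smooth. Qed.

Lemma sigma_dot_sigma s : in_open_int a b s -> vdot (sigma s) (sigma s) = 1.
Proof. intros; apply vdot_self_of_vnorm; auto. Qed.

Lemma tangent_dot_tangent s : in_open_int a b s -> vdot (tangent s) (tangent s) = 1.
Proof. intros; apply vdot_self_of_vnorm, sigma_unit_speed; auto. Qed.

Lemma sigma_dot_tangent s : in_open_int a b s -> vdot (sigma s) (tangent s) = 0.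
Proof.
  intros Hs.
  assert (E := is_derive_vdot _ _ s _ _ (is_vderive_sigma s Hs) (is_vderive_sigma s Hs)).
  apply (is_derive_const_on_open_int a b _ 1 s) in E; auto using sigma_dot_sigma.
  rewrite vdot_comm in E; lra.
Qed.

Lemma tangent_dot_accel s : in_open_int a b s -> vdot (tangent s) (accel s) = 0.
Proof.
  intros Hs.
  assert (E := is_derive_vdot _ _ s _ _ (is_vderive_tangent s Hs) (is_vderive_tangent s Hs)).
  apply (is_derive_const_on_open_int a b _ 1 s) in E; auto using tangent_dot_tangent.
  rewrite vdot_comm in E; lra.
Qed.

Lemma sigma_dot_accel s : in_open_int a b s -> vdot (sigma s) (accel s) = -1.
Proof.
  intros Hs.
  assert (E := is_derive_vdot _ _ s _ _ (is_vderive_sigma s Hs) (is_vderive_tangent s Hs)).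
  apply (is_derive_const_on_open_int a b _ 0 s) in E; auto using sigma_dot_tangent.
  rewrite tangent_dot_tangent in E; auto; lra.
Qed.

Lemma accel_frame s : in_open_int a b s ->
  accel s = vadd (vscal (-1) (sigma s)) (vscal (kappa s) (conormal s)).
Proof.
  intros Hs.
  rewrite (orthonormal_expansion (sigma s) (tangent s)) at 1;
    auto using sigma_dot_sigma, tangent_dot_tangent, sigma_dot_tangent.
  rewrite (vdot_comm _ (sigma s)), (vdot_comm _ (tangent s)), sigma_dot_accel, tangent_dot_accel;
    auto.
  unfold kappa, conormal; vring.
Qed.

Lemma is_vderive_conormal s : in_open_int a b s ->
  is_vderive conormal s (vscal (- kappa s) (tangent s)).
Proof.
  intros Hs.
  assert (D := is_vderive_vcross _ _ s _ _ (is_vderive_sigma s Hs) (is_vderive_tangent s Hs)).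
  replace (vscal (- kappa s) (tangent s))
    with (vadd (vcross (tangent s) (tangent s)) (vcross (sigma s) (accel s))); auto.
  rewrite accel_frame by auto.
  transitivity (vadd (vscal (kappa s * vdot (sigma s) (tangent s)) (sigma s))
                     (vscal (- kappa s * vdot (sigma s) (sigma s)) (tangent s))).
  - unfold conormal; vring.
  - rewrite sigma_dot_tangent, sigma_dot_sigma by auto; vring.
Qed.

Definition frame_field (f g : R -> R) (s : R) : vec3 :=
  vadd (vscal (f s) (sigma s)) (vscal (g s) (tangent s)).

Lemma tproj_conormal s x y z : in_open_int a b s ->
  tproj (conormal s) (vadd (vadd (vscal x (sigma s)) (vscal y (tangent s))) (vscal z (accel s))) =
  vadd (vscal (x - z) (sigma s)) (vscal y (tangent s)).
Proof.
  intros Hs; rewrite accel_frame by auto; unfold conormal.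
  rewrite <- (tproj_orthonormal (sigma s) (tangent s) (sigma_dot_sigma s Hs)
    (tangent_dot_tangent s Hs) (sigma_dot_tangent s Hs) (x - z) y (z * kappa s)).
  f_equal; vring.
Qed.

(* Differentiating [f sigma + g T] produces [f' sigma + (f + g') T + g A], and the tangential
   part of [A] is [- sigma]. *)
Lemma tproj_vderiv_frame_field f g f1 g1 s : in_open_int a b s ->
  is_derive f s (f1 s + g s) -> is_derive g s (g1 s - f s) ->
  exists V, is_vderive (frame_field f g) s V /\ tproj (conormal s) V = frame_field f1 g1 s.
Proof.
  intros Hs Hf Hg.
  exists (vadd (vadd (vscal (f1 s + g s) (sigma s)) (vscal (g1 s) (tangent s)))
               (vscal (g s) (accel s))).
  split.
  - replace (vadd (vadd (vscal (f1 s + g s) (sigma s)) (vscal (g1 s) (tangent s)))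
                  (vscal (g s) (accel s)))
      with (vadd (vadd (vscal (f1 s + g s) (sigma s)) (vscal (f s) (tangent s)))
                 (vadd (vscal (g1 s - f s) (tangent s)) (vscal (g s) (accel s)))) by vring.
    apply is_vderive_vadd; apply is_vderive_vscal; auto using is_vderive_sigma, is_vderive_tangent.
  - rewrite tproj_conormal by auto; unfold frame_field; vring.
Qed.

Local Notation Phi := (gauss_map (cone sigma)).

Lemma vpd0_cone t s : vpd 0 (cone sigma) (t, s) = sigma s.
Proof.
  change (vpd 0 (sep_field (fun x => x) sigma) (t, s) = sigma s).
  rewrite (vpd0_sep_field _ _ t s 1); [vring | exact (is_derive_id t)].
Qed.

Lemma vpd1_cone t s : in_open_int a b s -> vpd 1 (cone sigma) (t, s) = vscal t (tangent s).
Proof.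
  intros Hs; change (vpd 1 (sep_field (fun x => x) sigma) (t, s) = vscal t (tangent s)).
  apply vpd1_sep_field, is_vderive_sigma; auto.
Qed.

Definition cone_metric (i j : nat) (t : R) : R :=
  match i, j with O, O => 1 | S _, S _ => t * t | _, _ => 0 end.
Definition cone_metric_dt (i j : nat) (t : R) : R :=
  match i, j with S _, S _ => 2 * t | _, _ => 0 end.
Definition cone_christoffel (k i j : nat) (t : R) : R :=
  match k, i, j with
  | O, S _, S _ => - t
  | S _, O, S _ | S _, S _, O => / t
  | _, _, _ => 0
  end.

Lemma imetric_cone i j t s : in_open_int a b s ->
  imetric (cone sigma) i j (t, s) = cone_metric i j t.
Proof.
  intros Hs; unfold imetric.
  destruct i as [|i], j as [|j]; cbn [cone_metric];
    try replace (vpd (S i) (cone sigma) (t, s)) with (vpd 1 (cone sigma) (t, s)) by reflexivity;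
    try replace (vpd (S j) (cone sigma) (t, s)) with (vpd 1 (cone sigma) (t, s)) by reflexivity;
    rewrite ?vpd0_cone, ?vpd1_cone by auto.
  - apply sigma_dot_sigma; auto.
  - transitivity (t * vdot (sigma s) (tangent s)); [vunfold; ring|].
    rewrite sigma_dot_tangent; auto; ring.
  - transitivity (t * vdot (sigma s) (tangent s)); [vunfold; ring|].
    rewrite sigma_dot_tangent; auto; ring.
  - transitivity (t * t * vdot (tangent s) (tangent s)); [vunfold; ring|].
    rewrite tangent_dot_tangent; auto; ring.
Qed.

Lemma pd_imetric_cone k i j t s : cone_dom a b (t, s) ->
  pd k (imetric (cone sigma) i j) (t, s) =
  match k with O => cone_metric_dt i j t | S _ => 0 end.
Proof.
  intros Hq.
  rewrite (pd_ext_cone_dom a b k _ (fun q => cone_metric i j (fst q))); auto;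
    [|intros [t' s'] [_ Hs']; apply imetric_cone; auto].
  destruct k; cbn [pd fst snd]; [|apply Derive_const].
  apply is_derive_unique.
  destruct i, j; cbn [cone_metric cone_metric_dt];
    try exact (is_derive_const _ t); auto_derive; auto; ring.
Qed.

Lemma iinv_cone i j t s : cone_dom a b (t, s) ->
  iinv (cone sigma) i j (t, s) = match i, j with O, O => 1 | S _, S _ => / (t * t) | _, _ => 0 end.
Proof.
  intros [Ht Hs]; cbn [fst snd] in *.
  destruct i, j; unfold iinv, idet; rewrite !imetric_cone by auto; cbn [cone_metric]; field; lra.
Qed.

Lemma christ_cone k i j t s : cone_dom a b (t, s) ->
  christ (cone sigma) k i j (t, s) = cone_christoffel k i j t.
Proof.
  intros Hq; assert (Ht : t <> 0) by (destruct Hq; simpl in *; lra).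
  unfold christ, sum2.
  rewrite !(iinv_cone _ _ t s Hq), !(pd_imetric_cone _ _ _ t s Hq).
  destruct k, i, j; cbn [cone_metric_dt cone_christoffel]; field; auto.
Qed.

Lemma gauss_map_cone t s : cone_dom a b (t, s) -> Phi (t, s) = conormal s.
Proof.
  intros [Ht Hs]; cbn [fst snd] in *; unfold gauss_map.
  rewrite vpd0_cone, vpd1_cone by auto.
  replace (vcross (sigma s) (vscal t (tangent s))) with (vscal t (conormal s))
    by (unfold conormal; vring).
  assert (NN : vdot (conormal s) (conormal s) = 1)
    by (apply vdot_cross_self_orthonormal; auto using sigma_dot_sigma, tangent_dot_tangent,
          sigma_dot_tangent).
  unfold vnorm.
  replace (vdot (vscal t (conormal s)) (vscal t (conormal s)))
    with (t * t * vdot (conormal s) (conormal s)) by (vunfold; ring).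
  rewrite NN, Rmult_1_r, sqrt_square by lra.
  vfield; lra.
Qed.

Lemma vpd0_gauss_map_cone q : cone_dom a b q -> vpd 0 Phi q = vzero.
Proof.
  intros Hq; destruct q as [t s].
  rewrite (vpd_ext_cone_dom a b 0 _ (sep_field (fun _ => 1) conormal)); auto;
    [|intros [t' s'] Hq'; rewrite gauss_map_cone; auto; unfold sep_field; vring].
  rewrite (vpd0_sep_field _ _ t s 0); [vring | exact (is_derive_const 1 t)].
Qed.

Lemma vpd1_gauss_map_cone q : cone_dom a b q ->
  vpd 1 Phi q = sep_field (fun _ => 1) (frame_field (fun _ => 0) (fun u => - dkappa 0 u)) q.
Proof.
  intros Hq; destruct q as [t s].
  rewrite (vpd_ext_cone_dom a b 1 _ (sep_field (fun _ => 1) conormal)); auto;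
    [|intros [t' s'] Hq'; rewrite gauss_map_cone; auto; unfold sep_field; vring].
  rewrite (vpd1_sep_field _ _ t s _ (is_vderive_conormal s (proj2 Hq))).
  unfold sep_field, frame_field, dkappa; simpl; vring.
Qed.

Lemma pconn0_sep_frame r r' f g F :
  (forall t, 0 < t -> is_derive r t (r' t)) ->
  (forall q, cone_dom a b q -> F q = sep_field r (frame_field f g) q) ->
  forall q, cone_dom a b q -> pconn Phi 0 F q = sep_field r' (frame_field f g) q.
Proof.
  intros Hr HF [t s] Hq; unfold pconn.
  rewrite gauss_map_cone, (vpd_ext_cone_dom a b 0 F _ _ HF Hq), (vpd0_sep_field _ _ t s (r' t));
    auto; [|apply Hr, Hq].
  transitivity (tproj (conormal s) (vadd (vadd (vscal (r' t * f s) (sigma s))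
    (vscal (r' t * g s) (tangent s))) (vscal 0 (accel s)))); [f_equal; unfold frame_field; vring|].
  rewrite tproj_conormal by apply Hq; unfold sep_field, frame_field; vring.
Qed.

Lemma pconn1_sep_frame r f g f1 g1 F :
  (forall s, in_open_int a b s -> is_derive f s (f1 s + g s)) ->
  (forall s, in_open_int a b s -> is_derive g s (g1 s - f s)) ->
  (forall q, cone_dom a b q -> F q = sep_field r (frame_field f g) q) ->
  forall q, cone_dom a b q -> pconn Phi 1 F q = sep_field r (frame_field f1 g1) q.
Proof.
  intros Hf Hg HF [t s] [Ht Hs]; cbn [fst snd] in *; unfold pconn.
  destruct (tproj_vderiv_frame_field f g f1 g1 s Hs (Hf s Hs) (Hg s Hs)) as [V [HV HT]].
  rewrite gauss_map_cone, (vpd_ext_cone_dom a b 1 F _ _ HF), (vpd1_sep_field _ _ t s _ HV),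
    tproj_vscal, HT; auto; split; auto.
Qed.

(** * Tension and bitension *)

Definition tension_profile : R -> vec3 := frame_field (dkappa 0) (fun u => - dkappa 1 u).

Lemma tension_cone q : cone_dom a b q ->
  tension (cone sigma) Phi q = sep_field (fun t => / (t * t)) tension_profile q.
Proof.
  intros Hq; destruct q as [t s].
  assert (Ht : t <> 0) by (destruct Hq; simpl in *; lra).
  assert (dphi_ss : pconn Phi 1 (vpd 1 Phi) (t, s) = sep_field (fun _ => 1) tension_profile (t, s)).
  { apply (pconn1_sep_frame _ (fun _ => 0) (fun u => - dkappa 0 u)); auto using vpd1_gauss_map_cone.
    - intros u _; derive_from (is_derive_const 0 u); ring_R.
    - intros u Hu; derive_from (is_derive_Ropp _ _ _ (is_derive_dkappa 0 u Hu)); ring_R. }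
  assert (dphi_tt : pconn Phi 0 (vpd 0 Phi) (t, s) = vzero).
  { rewrite (pconn0_sep_frame (fun _ => 0) (fun _ => 0) (dkappa 0) (dkappa 0)); auto.
    - unfold sep_field; vring.
    - intros x _; exact (is_derive_const 0 x).
    - intros q Hq'; rewrite vpd0_gauss_map_cone by auto; unfold sep_field; vring. }
  unfold tension, vsum2.
  rewrite !(iinv_cone _ _ t s Hq), !(christ_cone _ _ _ t s Hq).
  unfold cone_christoffel; cbv beta iota.
  rewrite dphi_ss, dphi_tt, vpd0_gauss_map_cone by auto.
  repeat rewrite ?vscal_0_l, ?vadd_0_l, ?vadd_0_r, ?vsub_0_r.
  unfold sep_field; cbn [fst snd]; vring.
Qed.

Lemma bitension_cone t s : cone_dom a b (t, s) ->
  bitension (cone sigma) Phi (t, s) =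
  vscal (/ (t * t * t * t)) (frame_field (fun u => 3 * dkappa 0 u + 3 * dkappa 2 u + dkappa 0 u ^ 3)
                                         (fun u => - (dkappa 1 u + dkappa 3 u)) s).
Proof.
  intros Hq; assert (Ht : t <> 0) by (destruct Hq; simpl in *; lra).
  set (tau := tension (cone sigma) Phi).
  assert (tau_t : forall q, cone_dom a b q ->
    pconn Phi 0 tau q = sep_field (fun x => -2 / (x * x * x)) tension_profile q).
  { apply (pconn0_sep_frame (fun x => / (x * x))); [|exact tension_cone].
    intros x Hx; auto_derive; [apply Rmult_integral_contrapositive_currified; lra | field; lra]. }
  assert (tau_tt : pconn Phi 0 (pconn Phi 0 tau) (t, s) =
    sep_field (fun x => 6 / (x * x * x * x)) tension_profile (t, s)).
  { apply (pconn0_sep_frame (fun x => -2 / (x * x * x))); auto.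
    intros x Hx; auto_derive;
      [repeat apply Rmult_integral_contrapositive_currified; lra | field; lra]. }
  assert (tau_s : forall q, cone_dom a b q -> pconn Phi 1 tau q =
    sep_field (fun x => / (x * x)) (frame_field (fun u => 2 * dkappa 1 u)
                                               (fun u => dkappa 0 u - dkappa 2 u)) q).
  { apply (pconn1_sep_frame _ (dkappa 0) (fun u => - dkappa 1 u)); [| | exact tension_cone];
      intros u Hu.
    - derive_from (is_derive_dkappa 0 u Hu); ring_R.
    - derive_from (is_derive_Ropp _ _ _ (is_derive_dkappa 1 u Hu)); ring_R. }
  assert (tau_ss : pconn Phi 1 (pconn Phi 1 tau) (t, s) =
    sep_field (fun x => / (x * x)) (frame_field (fun u => 3 * dkappa 2 u - dkappa 0 u)
                                               (fun u => 3 * dkappa 1 u - dkappa 3 u)) (t, s)).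
  { apply (pconn1_sep_frame _ (fun u => 2 * dkappa 1 u) (fun u => dkappa 0 u - dkappa 2 u)); auto;
      intros u Hu.
    - derive_from (is_derive_scal _ _ 2 _ (is_derive_dkappa 1 u Hu)); ring_R.
    - derive_from (is_derive_Rminus _ _ _ _ _ (is_derive_dkappa 0 u Hu) (is_derive_dkappa 2 u Hu));
        ring_R. }
  assert (curvature : RS2 (vpd 1 Phi (t, s)) (tau (t, s)) (vpd 1 Phi (t, s)) =
    vscal (- (dkappa 0 s * dkappa 0 s * (dkappa 0 s / (t * t)))) (sigma s)).
  { unfold tau; rewrite tension_cone, vpd1_gauss_map_cone by auto.
    transitivity (RS2 (vscal (- dkappa 0 s) (tangent s))
      (vadd (vscal (dkappa 0 s / (t * t)) (sigma s)) (vscal (- dkappa 1 s / (t * t)) (tangent s)))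
      (vscal (- dkappa 0 s) (tangent s))).
    - unfold sep_field, tension_profile, frame_field; cbn [fst snd]; f_equal; vfield; auto.
    - rewrite (RS2_orthonormal _ _ (tangent_dot_tangent s (proj2 Hq))
                 (sigma_dot_tangent s (proj2 Hq))).
      f_equal; ring. }
  unfold bitension, trace_hess, vsum2.
  rewrite !(iinv_cone _ _ t s Hq), !(christ_cone _ _ _ t s Hq); fold tau.
  unfold cone_christoffel; cbv beta iota.
  rewrite curvature, tau_tt, tau_ss, tau_t, vpd0_gauss_map_cone by auto.
  repeat rewrite ?vscal_0_l, ?vadd_0_l, ?vadd_0_r, ?vsub_0_r, ?RS2_0_l.
  unfold sep_field, tension_profile, frame_field; cbn [fst snd]; vfield; auto.
Qed.

(* At [t = 1] both coefficients of the bitension on the orthonormal pair [sigma, T] vanish. *)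
Lemma curvature_ode_of_biharmonic : biharmonic (cone_dom a b) (cone sigma) Phi ->
  forall s, in_open_int a b s ->
  dkappa 3 s + dkappa 1 s = 0 /\ 3 * dkappa 0 s + 3 * dkappa 2 s + dkappa 0 s ^ 3 = 0.
Proof.
  intros Hbi s Hs.
  assert (B := Hbi (1, s) (conj Rlt_0_1 Hs)).
  rewrite bitension_cone in B by (split; auto; simpl; lra).
  destruct (orthonormal_comb_eq0 (sigma s) (tangent s) (sigma_dot_sigma s Hs)
              (tangent_dot_tangent s Hs) (sigma_dot_tangent s Hs)
              (3 * dkappa 0 s + 3 * dkappa 2 s + dkappa 0 s ^ 3) (- (dkappa 1 s + dkappa 3 s)))
    as [E1 E2].
  { rewrite <- B; unfold frame_field; vfield. }
  split; lra.
Qed.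

Lemma harmonic_gauss_map_cone_of_geodesic : (forall s, in_open_int a b s -> kappa s = 0) ->
  harmonic (cone_dom a b) (cone sigma) Phi.
Proof.
  intros Hk [t s] Hq; rewrite tension_cone by auto.
  assert (Hk' : dkappa 1 s = 0).
  { apply (is_derive_const_on_open_int a b kappa 0 s);
      [apply Hq | exact Hk | exact (is_derive_dkappa 0 s (proj2 Hq))]. }
  unfold sep_field, tension_profile, frame_field; cbn [fst snd].
  change (dkappa 0 s) with (kappa s); rewrite Hk, Hk' by apply Hq; vring.
Qed.

End UnitSpeedCurve.

Theorem theorem4p4 (a b : Rbar) (sigma : R -> vec3) :
  Rbar_lt a b ->
  smooth_curve a b sigma ->
  (forall s, in_open_int a b s -> vnorm (sigma s) = 1) ->
  (forall s, in_open_int a b s -> vnorm (vderiv sigma s) = 1) ->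
  ~ proper_biharmonic (cone_dom a b) (cone sigma) (gauss_map (cone sigma)).
Proof.
  intros _ Hsm Hunit Hspeed [Hbi Hnh]; apply Hnh.
  pose proof (curvature_ode_of_biharmonic a b sigma Hsm Hunit Hspeed Hbi) as ode.
  apply (harmonic_gauss_map_cone_of_geodesic a b sigma Hsm Hunit Hspeed).
  apply (cubic_ode_trivial a b (kappa sigma) (kappa_smooth a b sigma Hsm));
    intros s Hs; apply ode; exact Hs.
Qed.
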